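(* Let $\alpha=(\alpha_1,\dots,\alpha_n)$ be a composition, $\lambda$ a partition, and $k\ge0$ an integer with $\lambda_1-k\le n$. Let $T$ be a semistandard Young tableau of shape $\lambda\oplus\Delta_\alpha$ with lattice reading word such that the first row of $\lambda$ in $T$ contains at most $k$ entries equal to $1$. Then the tableau of shape $\mathcal{S}(\lambda,\alpha;k)$ obtained from $T$ by keeping the filling of $\Delta_\alpha$ and moving the filled copy of $\lambda$ (unchanged) to the right into the foundation position of $\mathcal{S}(\lambda,\alpha;k)$ is also a semistandard Young tableau with lattice reading word.
   Context: Diagrams use English convention: boxes $(r,c)$ with row index increasing downward, column index increasing rightward. For a composition $\alpha=(\alpha_1,\dots,\alpha_n)$, $|\alpha|=\sum_i\alpha_i$, and $\Delta_\alpha$ is the $180^\circ$ rotation of the Ferrers diagram of the partition $(n^{\alpha_n},(n-1)^{\alpha_{n-1}},\dots,1^{\alpha_1})$; it occupies rows $1,\dots,|\alpha|$, each row right-justified ending in column $n$, with $\alpha_i$ rows of length $i$, row lengths weakly increasing downward. For diagrams $D_1,D_2$, the direct sum $D_1\oplus D_2$ is the diagram consisting of disjoint copies of $D_1$ and $D_2$ placed so that the top-right box of $D_1$ is one step left and one step down from the bottom-left box of $D_2$. For $k\ge0$ and a partition $\lambda$ with $\lambda_1-k\le n$, $\mathcal{S}(\lambda,\alpha;k)$ consists of $\Delta_\alpha$ together with a copy of the Ferrers diagram of $\lambda$ (the foundation) placed so that row $r$ of $\lambda$ occupies row $|\alpha|+r$, columns $1-k$ through $\lambda_r-k$ (the first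 row of $\lambda$ starts one row below and $k$ columns left of the bottom-left box of $\Delta_\alpha$). A tableau is a filling of boxes by positive integers; it is semistandard if rows weakly increase left to right and columns strictly increase top to bottom. The reading word reads rows right to left, top row to bottom row; a sequence is lattice if in every initial segment, for every $j\ge1$, the number of $j$'s is at least the number of $(j+1)$'s. *)

From mathcomp Require Import all_boot all_order all_algebra.
Set Implicit Arguments. Unset Strict Implicit. Unset Printing Implicit Defensive.
Import Order.TTheory GRing.Theory Num.Theory.
Local Open Scope ring_scope.

(* A box (r, c): row r (increasing downward), column c (increasing rightward).
   Columns may be nonpositive (the foundation starts in column 1-k). *)
Definition box := (int * int)%type.
Definition diagram := seq box.

Definition translate (d : box) (D : diagram) : diagram :=
  [seq (b.1 + d.1, b.2 + d.2) | b <- D].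

Definition top_row (D : diagram) : int :=
  foldr (fun b m => Num.min b.1 m) (head (0, 0) D).1 D.
Definition bot_row (D : diagram) : int :=
  foldr (fun b m => Num.max b.1 m) (head (0, 0) D).1 D.
Definition cols_in_row (D : diagram) (r : int) : seq int :=
  [seq b.2 | b <- D & b.1 == r].
Definition max_col_in (D : diagram) (r : int) : int :=
  foldr Num.max (head 0 (cols_in_row D r)) (cols_in_row D r).
Definition min_col_in (D : diagram) (r : int) : int :=
  foldr Num.min (head 0 (cols_in_row D r)) (cols_in_row D r).

Definition top_right (D : diagram) : box := (top_row D, max_col_in D (top_row D)).
Definition bottom_left (D : diagram) : box := (bot_row D, min_col_in D (bot_row D)).

Definition dsum_shift (D1 D2 : diagram) : box :=
  ((bottom_left D2).1 + 1 - (top_right D1).1,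
   (bottom_left D2).2 - 1 - (top_right D1).2).

(* D1 (+) D2: D2 fixed, D1 translated so that its top-right box is one step
   left and one step down from the bottom-left box of D2. *)
Definition direct_sum (D1 D2 : diagram) : diagram :=
  translate (dsum_shift D1 D2) D1 ++ D2.

Definition is_composition (al : seq nat) : bool := all (fun x => 0 < x)%N al.
Definition is_partition (lam : seq nat) : bool :=
  sorted geq lam && all (fun x => 0 < x)%N lam.

(* Ferrers diagram of lam with row i (1-indexed) in row ro + i and
   columns co + 1 .. co + lam_i *)
Definition place (lam : seq nat) (ro co : int) : diagram :=
  flatten [seq [seq (ro + (i.+1)%:Z, co + (j.+1)%:Z) | j <- iota 0 (nth 0%N lam i)]
          | i <- iota 0 (size lam)].
Definition ferrers (lam : seq nat) : diagram := place lam 0 0.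

Definition Delta_rowlens (al : seq nat) : seq nat :=
  flatten [seq nseq (nth 0%N al i) i.+1 | i <- iota 0 (size al)].
(* row r (0-indexed, i.e. diagram row r+1) of length l, right-justified at column n *)
Definition Delta_row (n r l : nat) : diagram :=
  [seq ((r.+1)%:Z, (n - l + j + 1)%N%:Z) | j <- iota 0 l].
Definition Delta (al : seq nat) : diagram :=
  let ls := Delta_rowlens al in
  flatten [seq Delta_row (size al) r (nth 0%N ls r) | r <- iota 0 (size ls)].

(* S(lam, al; k): Delta_al together with the foundation lam, row r of lam in
   row |al| + r, columns 1-k .. lam_r - k. *)
Definition foundation (lam al : seq nat) (k : nat) : diagram :=
  place lam (sumn al)%:Z (- k%:Z).
Definition S_shape (lam al : seq nat) (k : nat) : diagram :=
  Delta al ++ foundation lam al k.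

Definition lam_copy (lam al : seq nat) : diagram :=
  translate (dsum_shift (ferrers lam) (Delta al)) (ferrers lam).

Definition tableau (D : diagram) (T : box -> nat) : Prop :=
  forall b, b \in D -> (0 < T b)%N.

Definition semistandard (D : diagram) (T : box -> nat) : Prop :=
  tableau D T /\
  (forall b b', b \in D -> b' \in D -> b.1 = b'.1 -> b.2 < b'.2 -> (T b <= T b')%N) /\
  (forall b b', b \in D -> b' \in D -> b.2 = b'.2 -> b.1 < b'.1 -> (T b < T b')%N).

(* reading order: rows top to bottom, each row right to left *)
Definition read_le (b b' : box) : bool :=
  (b.1 < b'.1) || ((b.1 == b'.1) && (b'.2 <= b.2)).
Definition reading_word (D : diagram) (T : box -> nat) : seq nat :=
  map T (sort read_le D).

Definition lattice (w : seq nat) : Prop :=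
  forall i j : nat, (0 < j)%N ->
    (count_mem j.+1 (take i w) <= count_mem j (take i w))%N.

Definition moved_tableau (lam al : seq nat) (k : nat) (T : box -> nat) : box -> nat :=
  fun b =>
    if b \in Delta al then T b
    else let d := dsum_shift (ferrers lam) (Delta al) in
         T (b.1 - (sumn al)%:Z + d.1, b.2 + k%:Z + d.2).

(* The lattice condition forces the filling of [Delta al]: the entry of each box is its
   depth in its column, so column [c] holds [1 .. h c] with [h] nondecreasing in [c].
   The first row of the copy of [lam] is read right after [Delta al]; the lattice condition
   along it, together with "at most [k] ones", shows that its entry in position [c + k]
   exceeds [h c]. That is column strictness exactly where the moved foundation meets
   [Delta al]. Everything else is a translation of the boxes of [lam] which preserves rows,
   the column order within the foundation and the reading order, hence the reading word. *)

From mathcomp Require Import all_boot all_order all_algebra.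
From mathcomp Require Import zify ring.
Import Order.TTheory GRing.Theory Num.Theory.

Lemma leq_sum_nat (n : nat) (f g : nat -> nat) :
  (forall i, i < n -> f i <= g i) ->
  \sum_(0 <= i < n) f i <= \sum_(0 <= i < n) g i.
Proof.
move=> fg; rewrite !big_seq; apply: leq_sum => i; rewrite mem_index_iota.
by move=> /andP[_]; apply: fg.
Qed.

Lemma ltn_sum_nat (n C : nat) (f g : nat -> nat) :
  (forall i, i < n -> f i <= g i) -> C < n -> f C < g C ->
  \sum_(0 <= i < n) f i < \sum_(0 <= i < n) g i.
Proof.
move=> fg Cn fgC.
have splitC F :
    \sum_(0 <= i < n) F i = \sum_(0 <= i < C) F i + (F C + \sum_(C.+1 <= i < n) F i).
  by rewrite (@big_cat_nat _ _ _ C) ?(ltnW Cn) //= (@big_ltn _ _ _ C n).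
rewrite !splitC -addnS; apply: leq_add.
  by apply: leq_sum_nat => i iC; apply: fg (ltn_trans iC Cn).
rewrite -addSn; apply: leq_add => //; rewrite !big_seq; apply: leq_sum => i.
by rewrite mem_index_iota => /andP[_]; apply: fg.
Qed.

Lemma sum_nat_ltn (L b : nat) : \sum_(0 <= j < L) (j < b) = minn L b.
Proof.
elim: L => [|L IH]; first by rewrite big_geq // min0n.
by rewrite big_nat_recr //= IH; case: (ltnP L b) => h /=; lia.
Qed.

Lemma sum_nat_range (L a b : nat) :
  \sum_(0 <= j < L) ((a <= j) && (j < b)) = minn L b - a.
Proof.
elim: L => [|L IH]; first by rewrite big_geq // min0n.
by rewrite big_nat_recr //= IH; case: (leqP a L) => h1; case: (ltnP L b) => h2 /=; lia.
Qed.

(* In a right-justified diagram with [n] columns (numbered from 0) and rows of lengths [l r],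
   the boxes of column [c] in the rows [r < K]. *)
Definition col_height (n : nat) (l : nat -> nat) (K c : nat) : nat :=
  \sum_(0 <= r < K) (n - l r <= c).

Section ColHeight.
Variables (n : nat) (l : nat -> nat).

Lemma col_height0 c : col_height n l 0 c = 0.
Proof. by rewrite /col_height big_geq. Qed.

Lemma col_heightS K c : col_height n l K.+1 c = col_height n l K c + (n - l K <= c).
Proof. by rewrite /col_height big_nat_recr. Qed.

Lemma leq_col_height K c c' : c <= c' -> col_height n l K c <= col_height n l K c'.
Proof.
move=> cc'; apply: leq_sum_nat => r _.
by case: (leqP (n - l r) c) => // /leq_trans/(_ cc') ->.
Qed.

Lemma leq_col_height_rows K K' c : K <= K' -> col_height n l K c <= col_height n l K' c.
Proof.
move=> /subnKC <-; elim: (K' - K) => [|x IH]; first by rewrite addn0.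
by rewrite addnS col_heightS (leq_trans IH) // leq_addr.
Qed.

Lemma col_height_eq0 K c : (forall r, r < K -> c < n - l r) -> col_height n l K c = 0.
Proof.
move=> h; rewrite /col_height big1_seq // => r /andP[_]; rewrite mem_index_iota.
by move=> /andP[_ /h]; rewrite ltnNge => /negbTE ->.
Qed.

(* Numbering the boxes of column [c] downwards uses each value [1 .. col_height K c] once. *)
Lemma sum_col_height_eq K c v :
  \sum_(0 <= r < K) ((n - l r <= c) && (col_height n l r.+1 c == v)) =
  (1 <= v) && (v <= col_height n l K c).
Proof.
elim: K => [|K IH]; first by rewrite big_geq // col_height0; case: v => [|[]].
rewrite big_nat_recr //= IH !col_heightS {IH}.
case: (n - l K <= c) => /=; last by rewrite !addn0.
by case: (ltngtP v (col_height n l K c + 1)) => h; case: (leqP v (col_height n l K c));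
  case: v h => [|v] h h2 //=; lia.
Qed.

End ColHeight.

Section LatticeFilling.
Variables (n m : nat) (l : nat -> nat) (t : nat -> nat -> nat).

Definition prefix_count (R C v : nat) : nat :=
  \sum_(0 <= r < m) \sum_(0 <= c < n)
     ((n - l r <= c) && ((r < R) || ((r == R) && (C <= c))) && (t r c == v)).

Hypothesis l_mono : forall r r', r <= r' -> r' < m -> l r <= l r'.
Hypothesis t_pos : forall r c, r < m -> c < n -> n - l r <= c -> 0 < t r c.
Hypothesis t_row : forall r c c', r < m -> c < c' -> c' < n -> n - l r <= c ->
  t r c <= t r c'.
Hypothesis t_col : forall r r' c, r < r' -> r' < m -> c < n -> n - l r <= c ->
  t r c < t r' c.
Hypothesis t_lattice : forall R C j, R < m -> C < n -> n - l R <= C -> 0 < j ->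
  prefix_count R C j.+1 <= prefix_count R C j.

Lemma col_height_le_filling R C : R < m -> C < n -> n - l R <= C ->
  col_height n l R.+1 C <= t R C.
Proof.
elim: R C => [|R IH] C Rm Cn hRC; first by rewrite col_heightS col_height0 hRC t_pos.
rewrite col_heightS hRC addn1.
case hR: (n - l R <= C).
  by apply: leq_ltn_trans (IH C (ltnW Rm) Cn hR) _; apply: t_col.
rewrite col_height_eq0 ?t_pos // => r rR.
by have := @l_mono r R rR (ltnW Rm); move: hR; lia.
Qed.

Lemma prefix_count_cols R C v : R < m -> n - l R <= C ->
    (forall r c, r < R -> c < n -> n - l r <= c -> t r c = col_height n l r.+1 c) ->
  prefix_count R C v =
  \sum_(0 <= c < n) (((1 <= v) && (v <= col_height n l R c)) + ((C <= c) && (t R c == v))).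
Proof.
move=> Rm hRC above; rewrite /prefix_count exchange_big /=.
apply: eq_big_nat => c /andP[_ cn].
rewrite (@big_cat_nat _ _ _ R) ?(ltnW Rm) //= (@big_ltn _ _ _ R m) //.
rewrite [X in _ + (_ + X)]big1_seq ?addn0; last first.
  move=> r /andP[_]; rewrite mem_index_iota => /andP[Rr _].
  by rewrite ltnNge (ltnW Rr) gtn_eqF // andbF.
rewrite -(sum_col_height_eq n l R c v) ltnn eqxx /=; congr (_ + _).
  apply: eq_big_nat => r /andP[_ rR]; rewrite rR /=.
  by case: (n - l r <= c) /idP => //= hr; rewrite above.
by case Cc: (C <= c); rewrite ?andbF //= (leq_trans hRC Cc).
Qed.

(* Induction along the reading order: a larger entry [e] at [(R, C)] would make the prefix
   ending at [(R, C)] contain more [e]'s than [e.-1]'s. *)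
Lemma filling_eq_col_height R C : R < m -> C < n -> n - l R <= C ->
  t R C = col_height n l R.+1 C.
Proof.
elim/ltn_ind: R C => R IHR C; have [d] := ubnP (n - C); elim: d C => // d IHd C dC Rm Cn hRC.
have right c : C < c -> c < n -> t R c = col_height n l R.+1 c.
  by move=> Cc cn; apply: IHd => //; lia.
have above r c : r < R -> c < n -> n - l r <= c -> t r c = col_height n l r.+1 c.
  by move=> rR cn; apply: IHR => //; apply: ltn_trans Rm.
have lb := col_height_le_filling R C Rm Cn hRC.
have hS : col_height n l R.+1 C = col_height n l R C + 1 by rewrite col_heightS hRC.
set e := t R C in lb *; set g := col_height n l R C in hS.
case: (ltngtP e (col_height n l R.+1 C)) => // lt_e; first by move: lb; rewrite leqNgt lt_e.
exfalso; have e1 : 0 < e.-1 by lia.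
have := t_lattice R C e.-1 Rm Cn hRC e1; rewrite prednK; last by lia.
rewrite !prefix_count_cols // leqNgt => /negP; apply.
apply: (@ltn_sum_nat n C) => //; last first.
  by rewrite leqnn eqxx /= -/e -/g; lia.
move=> c cn; case: (ltngtP c C) => cC.
- have : col_height n l R c <= g by apply/leq_col_height/ltnW.
  by lia.
- have e_le : e <= col_height n l R.+1 C.+1.
    rewrite -right ?(leq_ltn_trans cC cn) //.
    by apply: t_row => //; apply: leq_ltn_trans cC cn.
  have := leq_col_height n l R.+1 C.+1 c cC; rewrite right //.
  by move: e_le; rewrite !col_heightS (leq_trans hRC (ltnW cC)) /=; lia.
- by rewrite cC /= -/e -/g; lia.
Qed.

End LatticeFilling.

Section FirstRow.
Variables (n L k : nat) (H X : nat -> nat).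

(* The number of entries [v] in columns [c < n] filled with [1 .. H c]. *)
Let cnt (v : nat) : nat := \sum_(0 <= c < n) ((1 <= v) && (v <= H c)).

Hypothesis H_mono : forall c c', c <= c' -> H c <= H c'.
Hypothesis X_mono : forall j j', j <= j' -> j' < L -> X j <= X j'.
Hypothesis X_pos : forall j, j < L -> 0 < X j.
Hypothesis X_ones : \sum_(0 <= j < L) (X j == 1) <= k.
Hypothesis X_lattice : forall q w, 0 < w ->
  cnt w.+1 + \sum_(0 <= j < L) ((q <= j) && (X j == w.+1)) <=
  cnt w + \sum_(0 <= j < L) ((q <= j) && (X j == w)).

(* Apply the lattice condition just before the first entry [w.+1] of the row. *)
Lemma count_succ_le w : 0 < w -> \sum_(0 <= j < L) (X j == w.+1) + cnt w.+1 <= cnt w.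
Proof.
move=> w0; have ex_q : exists j, (L <= j) || (w.+1 <= X j) by exists L; rewrite leqnn.
have [q Pq qmin] := ex_minnP ex_q.
have := X_lattice q w w0.
have -> : \sum_(0 <= j < L) ((q <= j) && (X j == w.+1)) = \sum_(0 <= j < L) (X j == w.+1).
  apply: eq_big_nat => j /andP[_ jL]; case: (leqP q j) => //= jq.
  by case: (X j =P w.+1) => // xj; have := qmin j; rewrite xj leqnn orbT leqNgt jq => /(_ isT).
have -> : \sum_(0 <= j < L) ((q <= j) && (X j == w)) = 0.
  apply: big1_seq => j; rewrite mem_index_iota => /andP[_ /andP[_ jL]].
  case: (leqP q j) => //= qj; have qL := leq_ltn_trans qj jL.
  by move: Pq; rewrite leqNgt qL /=; have := X_mono q j qj jL; lia.
by rewrite addn0 addnC.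
Qed.

Lemma count_between_le w : 0 < w ->
  \sum_(0 <= j < L) ((2 <= X j) && (X j <= w)) + cnt w <= cnt 1.
Proof.
elim: w => [//|[|w] IH _].
  by rewrite big1_seq ?add0n // => j _; case: (X j) => [|[|x]].
have splitw : \sum_(0 <= j < L) ((2 <= X j) && (X j <= w.+2)) =
    \sum_(0 <= j < L) ((2 <= X j) && (X j <= w.+1)) + \sum_(0 <= j < L) (X j == w.+2).
  by rewrite -big_split /=; apply: eq_big_nat => j _; lia.
by have := IH isT; have := @count_succ_le w.+1 isT; rewrite splitw; lia.
Qed.

Lemma ones_lt_k j : j < L -> X j = 1 -> j < k.
Proof.
move=> jL xj.
have : \sum_(0 <= j' < L) (j' < j.+1) <= \sum_(0 <= j' < L) (X j' == 1).
  apply: leq_sum_nat => j' j'L; case: (ltnP j' j.+1) => //= hj.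
  by have := X_mono j' j hj jL; have := X_pos j' j'L; rewrite xj; lia.
by rewrite sum_nat_ltn; move: X_ones jL; lia.
Qed.

(* The [c + 1] entries in positions [k .. c + k] lie in [2 .. X (c + k)], while
   [count_between_le] allows at most [cnt 1 - cnt (X (c + k))] such entries, which is at
   most [c] when [X (c + k) <= H c]. *)
Lemma height_lt_first_row c : c < n -> c + k < L -> H c < X (c + k).
Proof.
move=> cn ckL; rewrite ltnNge; apply/negP => vle; set v := X (c + k) in vle.
have v2 : 2 <= v.
  have := X_pos (c + k) ckL; rewrite -/v.
  by case: (v =P 1) => [/(ones_lt_k (c + k) ckL)|]; lia.
have low : c.+1 <= \sum_(0 <= j < L) ((2 <= X j) && (X j <= v)).
  have : \sum_(0 <= j < L) ((k <= j) && (j < c + k + 1)) <=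
         \sum_(0 <= j < L) ((2 <= X j) && (X j <= v)).
    apply: leq_sum_nat => j jL.
    case: (leqP k j) => //= kj; case: (ltnP j (c + k + 1)) => //= jc.
    have := X_mono j (c + k) (_ : j <= c + k) ckL; have := X_pos j jL.
    by case: (X j =P 1) => [/(ones_lt_k j jL)|]; rewrite -/v; lia.
  by rewrite sum_nat_range; lia.
have up : cnt 1 <= c + cnt v.
  have : cnt 1 <= \sum_(0 <= c' < n) ((c' < c) + ((1 <= v) && (v <= H c'))).
    apply: leq_sum_nat => c' c'n.
    by case: (ltnP c' c) => cc /=; [lia | have := H_mono c c' cc; lia].
  by rewrite big_split /= sum_nat_ltn /cnt; lia.
by have := @count_between_le v (ltnW v2); lia.
Qed.

End FirstRow.

Section DeltaRows.
Variable al : seq nat.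
Local Notation l := (nth 0 (Delta_rowlens al)).

Lemma size_Delta_rowlens : size (Delta_rowlens al) = sumn al.
Proof.
rewrite /Delta_rowlens size_flatten /shape -map_comp.
rewrite (eq_map (g := nth 0 al)); last by move=> i /=; rewrite size_nseq.
by rewrite map_nth_iota0 // take_size.
Qed.

Lemma mem_Delta_rowlens x : x \in Delta_rowlens al -> 0 < x <= size al.
Proof.
move=> /flattenP[s /mapP[i]]; rewrite mem_iota add0n => /andP[_ iab] -> /nseqP[-> _].
by rewrite ltn0Sn.
Qed.

Lemma Delta_rowlens_le r : l r <= size al.
Proof.
case: (ltnP r (sumn al)) => rm; last by rewrite nth_default // size_Delta_rowlens.
have /mem_Delta_rowlens/andP[] // : l r \in Delta_rowlens al.
by rewrite mem_nth // size_Delta_rowlens.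
Qed.

Lemma Delta_rowlens_gt0 r : r < sumn al -> 0 < l r.
Proof.
move=> rm; have /mem_Delta_rowlens/andP[] // : l r \in Delta_rowlens al.
by rewrite mem_nth // size_Delta_rowlens.
Qed.

Lemma sorted_Delta_rowlens : sorted leq (Delta_rowlens al).
Proof.
rewrite sorted_pairwise; last exact: leq_trans.
rewrite /Delta_rowlens; elim: (size al) => [|N IH] //.
rewrite -addn1 iotaD map_cat flatten_cat pairwise_cat IH /= cats0 add0n.
apply/andP; split.
  apply/allrelP => x y /flattenP[s /mapP[i]]; rewrite mem_iota add0n => /andP[_ iN] ->.
  by move=> /nseqP [-> _] /nseqP [-> _]; rewrite ltnS ltnW.
elim: (nth 0 al N) => [|a IHa] //=; rewrite IHa andbT.
by apply/allP => x /nseqP [-> _].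
Qed.

Lemma Delta_rowlens_mono r r' : r <= r' -> r' < sumn al -> l r <= l r'.
Proof.
move=> rr' r'm; apply: (sorted_leq_nth leq_trans leqnn 0 sorted_Delta_rowlens) => //.
  by rewrite inE size_Delta_rowlens (leq_ltn_trans rr' r'm).
by rewrite inE size_Delta_rowlens.
Qed.

Lemma mem_Delta b : b \in Delta al <->
  exists r c, [/\ r < sumn al, c < size al, size al - l r <= c
            & b = (Posz r.+1, Posz c.+1)].
Proof.
rewrite /Delta size_Delta_rowlens; split.
  move=> /flattenP[s /mapP[r]]; rewrite mem_iota add0n => /andP[_ rm] ->.
  move=> /mapP[j]; rewrite mem_iota add0n => /andP[_ jl] ->.
  by have := Delta_rowlens_le r; exists r, (size al - l r + j); split; rewrite ?addn1 //; lia.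
move=> [r [c [rm cn hc ->]]]; apply/flattenP; exists (Delta_row (size al) r (l r)).
  by apply/mapP; exists r => //; rewrite mem_iota add0n.
apply/mapP; exists (c - (size al - l r)); first by rewrite mem_iota add0n; lia.
by congr (_, _); congr Posz; lia.
Qed.

Lemma count_Delta (P : pred box) : count P (Delta al) =
  \sum_(0 <= r < sumn al) \sum_(0 <= c < size al)
     ((size al - l r <= c) && P (Posz r.+1, Posz c.+1)).
Proof.
have iotaE N : iota 0 N = index_iota 0 N by rewrite /index_iota subn0.
rewrite /Delta size_Delta_rowlens count_flatten sumnE !big_map iotaE.
apply: eq_bigr => r _; have ln := Delta_rowlens_le r.
rewrite /Delta_row count_map -sumn_count sumnE big_map iotaE.
rewrite [RHS](@big_cat_nat _ _ _ (size al - l r)) ?leq_subr //=.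
rewrite [X in _ = X + _]big1_seq ?add0n; last first.
  by move=> c /andP[_]; rewrite mem_index_iota => /andP[_ h]; rewrite leqNgt h.
rewrite -[in RHS](add0n (size al - l r)) big_addn subKn //.
apply: eq_bigr => j _; rewrite add0n leq_addl /=; congr (P (_, _)); congr Posz; lia.
Qed.

End DeltaRows.

Local Open Scope ring_scope.

Lemma read_le_trans : transitive read_le.
Proof.
move=> [a1 a2] [b1 b2] [c1 c2]; rewrite /read_le /=.
by move=> /orP[h|/andP[/eqP h h']] /orP[h2|/andP[/eqP h2 h2']]; apply/orP; lia.
Qed.

Lemma read_le_total : total read_le.
Proof.
move=> [a1 a2] [b1 b2]; rewrite /read_le /=.
by case: (ltgtP a1 b1) => //= _; rewrite le_total.
Qed.

Lemma read_le_anti : antisymmetric read_le.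
Proof.
move=> [a1 a2] [b1 b2]; rewrite /read_le /= => /andP[].
move=> /orP[h|/andP[/eqP h h']] /orP[h2|/andP[/eqP h2 h2']]; try lia.
have e2 : a2 = b2 by lia.
by rewrite h e2.
Qed.

Lemma read_le_lt_row (a b : box) : b.1 < a.1 -> read_le a b = false.
Proof. by case: a b => [a1 a2] [b1 b2] /= h; rewrite /read_le /=; apply/negbTE/negP; lia. Qed.

Lemma sorted_filter_take (T : eqType) (r : rel T) (P : pred T) s :
  transitive r -> (forall a b, r a b -> P b -> P a) -> sorted r s ->
  filter P s = take (count P s) s.
Proof.
move=> tr Pc; elim: s => [|a s IH] //= srt.
have amin := order_path_min tr srt.
case Pa: (P a) => /=; first by rewrite IH //; apply: path_sorted srt.
have notP y : y \in s -> P y = false.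
  by move=> ys; apply/negbTE/negP => /(Pc _ _ (allP amin y ys)); rewrite Pa.
by rewrite (eq_in_filter notP) filter_pred0 (eq_in_count notP) count_pred0.
Qed.

Lemma lattice_count_le (D : diagram) (T : box -> nat) (x : box) (j : nat) :
  lattice (reading_word D T) -> (0 < j)%N ->
  (count (fun y => read_le y x && (T y == j.+1)) D <=
   count (fun y => read_le y x && (T y == j)) D)%N.
Proof.
move=> lat j0; set s := sort read_le D.
have srt : sorted read_le s by apply/sort_sorted/read_le_total.
have pe : perm_eq s D by rewrite perm_sort.
have ft := @sorted_filter_take _ read_le (fun y => read_le y x) s read_le_trans
  (fun a b ab bx => read_le_trans _ _ _ ab bx) srt.
have := lat (count (fun y => read_le y x) s) j j0.
rewrite /reading_word -/s -map_take -ft !count_map !count_filter !(permP pe).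
have E v : count (predI (preim T (pred1 v)) (read_le^~ x)) D =
    count (fun y => read_le y x && (T y == v)) D.
  by apply: eq_count => y /=; rewrite andbC.
by rewrite !E.
Qed.

Lemma reading_word_map (D1 D2 : diagram) (f : box -> box) (T1 T2 : box -> nat) :
  {in D1 &, forall x y, read_le (f x) (f y) = read_le x y} ->
  perm_eq (map f D1) D2 -> {in D1, forall b, T1 b = T2 (f b)} ->
  reading_word D1 T1 = reading_word D2 T2.
Proof.
move=> fread pe fT; rewrite /reading_word.
rewrite -(perm_sortP read_le_total read_le_trans read_le_anti _ _ pe).
rewrite (@homo_sort_map_in _ _ [in D1] f read_le read_le) -?map_comp.
- by apply/eq_in_map => b; rewrite mem_sort => /fT.
- by move=> x y xD yD /=; rewrite !fread // => /read_le_anti.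
- by move=> x y z yD xD zD /=; rewrite !fread //; apply: read_le_trans.
- by move=> x y _ _; apply: read_le_total.
- by move=> x y xD yD; rewrite fread.
- by apply/allP.
Qed.

Lemma read_le_nat (a b a' b' : nat) :
  read_le (Posz a, Posz b) (Posz a', Posz b') = (a < a')%N || ((a == a') && (b' <= b)%N).
Proof. by rewrite /read_le /=; apply/idP/idP; lia. Qed.

Lemma count_Delta_prefix al R C (P : pred box) :
  count (fun y => read_le y (Posz R.+1, Posz C.+1) && P y) (Delta al) =
  (\sum_(0 <= r < sumn al) \sum_(0 <= c < size al)
     ((size al - nth 0 (Delta_rowlens al) r <= c) && ((r < R) || (r == R) && (C <= c)) &&
      P (Posz r.+1, Posz c.+1)))%N.
Proof.
rewrite count_Delta; apply: eq_bigr => r _; apply: eq_bigr => c _.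
by rewrite read_le_nat ltnS eqSS ltnS andbA.
Qed.

Lemma head_in (T : eqType) (x : T) s : s != [::] -> head x s \in s.
Proof. by case: s => //= a s _; rewrite mem_head. Qed.

Lemma foldr_minE (s : seq int) x0 v : v \in s -> (forall y, y \in s -> v <= y) ->
  v <= x0 -> foldr Num.min x0 s = v.
Proof.
move=> vs lev vx; apply/eqP; rewrite eq_le; apply/andP; split.
  elim: s vs {lev} => //= a s IH; rewrite in_cons ge_min.
  by case/orP=> [/eqP ->|/IH ->]; rewrite ?lexx ?orbT.
elim: s {vs} lev => //= a s IH lev; rewrite le_min lev ?mem_head // IH // => y ys.
by apply: lev; rewrite in_cons ys orbT.
Qed.

Lemma foldr_maxE (s : seq int) x0 v : v \in s -> (forall y, y \in s -> y <= v) ->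
  x0 <= v -> foldr Num.max x0 s = v.
Proof.
move=> vs gev vx; apply/eqP; rewrite eq_le; apply/andP; split; last first.
  elim: s vs {gev} => //= a s IH; rewrite in_cons le_max.
  by case/orP=> [/eqP ->|/IH ->]; rewrite ?lexx ?orbT.
elim: s {vs} gev => //= a s IH gev; rewrite ge_max gev ?mem_head // IH // => y ys.
by apply: gev; rewrite in_cons ys orbT.
Qed.

Lemma top_rowE (D : diagram) :
  top_row D = foldr Num.min (head (0, 0) D).1 (map fst D).
Proof. by rewrite /top_row; move: (head _ D).1 => x0; elim: D => //= a D ->. Qed.

Lemma bot_rowE (D : diagram) :
  bot_row D = foldr Num.max (head (0, 0) D).1 (map fst D).
Proof. by rewrite /bot_row; move: (head _ D).1 => x0; elim: D => //= a D ->. Qed.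

Lemma top_row_eq (D : diagram) (r : int) :
  r \in map fst D -> {in D, forall b, r <= b.1} -> top_row D = r.
Proof.
move=> rD ler; have D0 : D != [::] by case: (D) rD.
rewrite top_rowE; apply: foldr_minE => //; last exact/ler/head_in.
by move=> _ /mapP[b bD ->]; apply: ler.
Qed.

Lemma bot_row_eq (D : diagram) (r : int) :
  r \in map fst D -> {in D, forall b, b.1 <= r} -> bot_row D = r.
Proof.
move=> rD ger; have D0 : D != [::] by case: (D) rD.
rewrite bot_rowE; apply: foldr_maxE => //; last exact/ger/head_in.
by move=> _ /mapP[b bD ->]; apply: ger.
Qed.

Lemma mem_place lam ro co b : b \in place lam ro co <->
  exists i j, [/\ (i < size lam)%N, (j < nth 0%N lam i)%N & b = (ro + i.+1%:Z, co + j.+1%:Z)].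
Proof.
rewrite /place; split.
  move=> /flattenP[s /mapP[i]]; rewrite mem_iota add0n => /andP[_ il] ->.
  by move=> /mapP[j]; rewrite mem_iota add0n => /andP[_ jl] ->; exists i, j.
move=> [i [j [il jl ->]]]; apply/flattenP; eexists.
  by apply/mapP; exists i => //; rewrite mem_iota add0n.
by apply/mapP; exists j => //; rewrite mem_iota add0n.
Qed.

Lemma translate_place lam ro co d :
  translate d (place lam ro co) = place lam (ro + d.1) (co + d.2).
Proof.
rewrite /translate /place map_flatten -map_comp; congr flatten.
apply: eq_map => i /=; rewrite -map_comp; apply: eq_map => j /=.
by congr (_, _); rewrite addrAC.
Qed.

Lemma count_place lam ro co (P : pred box) : count P (place lam ro co) =
  (\sum_(0 <= i < size lam) \sum_(0 <= j < nth 0%N lam i)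
     P ((ro + i.+1%:Z)%R, (co + j.+1%:Z)%R))%N.
Proof.
rewrite /place count_flatten sumnE !big_map /index_iota subn0.
by apply: eq_bigr => i _; rewrite count_map -sumn_count sumnE big_map subn0.
Qed.

Lemma partition_head_gt0 lam : is_partition lam -> lam != [::] -> (0 < head 0%N lam)%N.
Proof. by case: lam => //= a l /andP[_ /andP[]]. Qed.

Lemma partition_nth_le_head lam i : is_partition lam -> (nth 0%N lam i <= head 0%N lam)%N.
Proof.
move=> /andP[srt _]; case: (ltnP i (size lam)) => il; last by rewrite nth_default.
rewrite -nth0; apply: (sorted_leq_nth (leT := geq)) => //.
- by move=> x y z /= h1 h2; apply: leq_trans h2 h1.
- by move=> x /=.
- by rewrite inE (leq_ltn_trans _ il).
Qed.

Lemma top_row_place lam ro co : is_partition lam -> lam != [::] ->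
  top_row (place lam ro co) = ro + 1.
Proof.
move=> lp l0; apply: top_row_eq => [|b /mem_place[i [j [_ _ ->]]]]; last by rewrite lerD2l.
apply/mapP; exists (ro + 1, co + 1) => //; apply/mem_place; exists 0%N, 0%N.
by rewrite nth0 partition_head_gt0 // lt0n size_eq0.
Qed.

Lemma bot_row_Delta al : bot_row (Delta al) = Posz (sumn al).
Proof.
case: (posnP (sumn al)) => [m0|m0].
  by rewrite /Delta size_Delta_rowlens m0.
have l0 : (0 < nth 0%N (Delta_rowlens al) (sumn al).-1)%N.
  by apply: Delta_rowlens_gt0; rewrite ltn_predL.
apply: bot_row_eq => [|b /mem_Delta[r [c [rm _ _ ->]]]]; last by rewrite /= lez_nat.
apply/mapP; exists (Posz (sumn al), Posz (size al)) => //; apply/mem_Delta.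
have n0 : (0 < size al)%N by case: (al) m0.
exists (sumn al).-1, (size al).-1; rewrite !prednK //.
by have := Delta_rowlens_le al (sumn al).-1; split => //; lia.
Qed.

Lemma place_row_gt lam ro co b : b \in place lam ro co -> ro < b.1.
Proof. by move=> /mem_place[i [j [_ _ ->]]] /=; rewrite ltrDl. Qed.

Lemma dsum_shift_ferrers_fst lam al : is_partition lam -> lam != [::] ->
  (dsum_shift (ferrers lam) (Delta al)).1 = Posz (sumn al).
Proof.
move=> lp l0; rewrite /dsum_shift /top_right /bottom_left bot_row_Delta.
by rewrite /ferrers top_row_place // addrK.
Qed.

Section MovedTableau.
Variables (al lam : seq nat) (k : nat).
Hypothesis lp : is_partition lam.

Local Notation m := (sumn al).
Local Notation n := (size al).
Local Notation L := (head 0%N lam).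
Local Notation l := (nth 0%N (Delta_rowlens al)).
Local Notation d := (dsum_shift (ferrers lam) (Delta al)).
Local Notation D := (direct_sum (ferrers lam) (Delta al)).
Local Notation F := (place lam (Posz m) (- Posz k)).
Local Notation S := (S_shape lam al k).

Definition move_box (b : box) : box :=
  if b \in Delta al then b else (b.1 - Posz m + d.1, b.2 + Posz k + d.2).

Lemma moved_tableauE T b : moved_tableau lam al k T b = T (move_box b).
Proof. by rewrite /moved_tableau /move_box; case: ifP. Qed.

Lemma direct_sum_ferrersE : D = place lam d.1 d.2 ++ Delta al.
Proof. by rewrite /direct_sum /ferrers translate_place !add0r. Qed.

Lemma lam_copyE : lam_copy lam al = place lam d.1 d.2.
Proof. by rewrite /lam_copy /ferrers translate_place !add0r. Qed.

Lemma Delta_sub_direct_sum b : b \in Delta al -> b \in D.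
Proof. by rewrite direct_sum_ferrersE mem_cat orbC => ->. Qed.

Lemma lam_copy_sub_direct_sum b : b \in place lam d.1 d.2 -> b \in D.
Proof. by rewrite direct_sum_ferrersE mem_cat => ->. Qed.

Lemma mem_S_shape b : (b \in S) = (b \in Delta al) || (b \in F).
Proof. by rewrite /S_shape mem_cat. Qed.

Lemma Delta_row_bounds b : b \in Delta al -> 0 < b.1 <= Posz m.
Proof. by move=> /mem_Delta[r [c [rm _ _ ->]]] /=; rewrite lez_nat. Qed.

Lemma Delta_foundation_row_lt b b' : b \in Delta al -> b' \in F -> b.1 < b'.1.
Proof. by move=> /Delta_row_bounds/andP[_ bm] /place_row_gt; apply: le_lt_trans. Qed.

Lemma foundation_notin_Delta b : b \in F -> b \notin Delta al.
Proof.
by move=> bF; apply/negP => /Delta_foundation_row_lt/(_ bF); rewrite ltxx.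
Qed.

Lemma move_box_foundation b : b \in F -> move_box b = (b.1, b.2 + (Posz k + d.2)).
Proof.
move=> bF; have l0 : lam != [::] by case: (lam) bF.
rewrite /move_box (negbTE (foundation_notin_Delta _ bF)) dsum_shift_ferrers_fst //.
by congr (_, _); ring.
Qed.

Lemma move_box_offset b : b \in S ->
  move_box b = (b.1, b.2 + (if b \in Delta al then 0 else Posz k + d.2)).
Proof.
rewrite mem_S_shape => /orP[bD|bF]; first by rewrite /move_box bD addr0; case: b bD.
by rewrite move_box_foundation // (negbTE (foundation_notin_Delta _ bF)).
Qed.

Lemma S_shape_above_Delta b b' : b \in S -> b' \in S -> b.1 <= b'.1 ->
  b' \in Delta al -> b \in Delta al.
Proof.
rewrite mem_S_shape => /orP[//|bF] _ bb' b'D.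
by have := Delta_foundation_row_lt _ _ b'D bF; rewrite ltNge bb'.
Qed.

Lemma map_move_box_foundation : map move_box F = place lam d.1 d.2.
Proof.
case: (eqVneq lam [::]) => [->//|l0].
have -> : map move_box F = translate (0, Posz k + d.2) F.
  by apply/eq_in_map => b /move_box_foundation ->; rewrite addr0.
by rewrite translate_place dsum_shift_ferrers_fst //= addr0 addKr.
Qed.

Lemma perm_move_box : perm_eq (map move_box S) D.
Proof.
rewrite /S_shape map_cat direct_sum_ferrersE perm_catC (@map_id_in _ move_box (Delta al)).
  by rewrite /foundation map_move_box_foundation.
by move=> b bD; rewrite /move_box bD.
Qed.

Lemma move_box_in b : b \in S -> move_box b \in D.
Proof. by move=> bS; rewrite -(perm_mem perm_move_box) map_f. Qed.

Lemma read_le_move_box : {in S &, forall x y, read_le (move_box x) (move_box y) = read_le x y}.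
Proof.
move=> x y xS yS; rewrite !move_box_offset // /read_le /=.
case: (x.1 =P y.1) => [ex|] //=.
have -> : (x \in Delta al) = (y \in Delta al).
  by apply/idP/idP; apply: S_shape_above_Delta; rewrite // ex.
by rewrite lerD2r.
Qed.

Lemma reading_word_moved T :
  reading_word S (moved_tableau lam al k T) = reading_word D T.
Proof.
apply: reading_word_map read_le_move_box perm_move_box _ => b _.
exact: moved_tableauE.
Qed.

Lemma count_lam_copy_before (x : box) (P : pred box) : x.1 <= Posz m ->
  count (fun y => read_le y x && P y) (place lam d.1 d.2) = 0%N.
Proof.
move=> xm; case: (eqVneq lam [::]) => [->//|l0].
apply/eqP; rewrite -leqn0 leqNgt -has_count; apply/hasPn => y /place_row_gt.
by rewrite dsum_shift_ferrers_fst // => /(le_lt_trans xm) /read_le_lt_row ->.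
Qed.

Lemma count_Delta_before (x : box) (P : pred box) : Posz m < x.1 ->
  count (fun y => read_le y x && P y) (Delta al) = count P (Delta al).
Proof.
move=> mx; apply: eq_in_count => y /Delta_row_bounds/andP[_ ym].
by rewrite /read_le (le_lt_trans ym mx).
Qed.

Lemma sum_partition_row0 (P : nat -> nat -> nat) : lam != [::] ->
    (forall i j, (0 < i)%N -> P i j = 0%N) ->
  (\sum_(0 <= i < size lam) \sum_(0 <= j < nth 0%N lam i) P i j =
   \sum_(0 <= j < L) P 0%N j)%N.
Proof.
move=> l0 P0; rewrite big_ltn ?lt0n ?size_eq0 // nth0 [X in (_ + X)%N]big1_seq ?addn0 //.
by move=> i /andP[_]; rewrite mem_index_iota => /andP[i0 _]; rewrite big1 // => j _; apply: P0.
Qed.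

Lemma count_lam_copy_row0 q (P : pred box) : lam != [::] ->
  count (fun y => read_le y (d.1 + 1, d.2 + Posz q.+1) && P y) (place lam d.1 d.2) =
  (\sum_(0 <= j < L) ((q <= j) && P ((d.1 + 1)%R, (d.2 + Posz j.+1)%R)))%N.
Proof.
move=> l0; rewrite count_place sum_partition_row0 //.
  by apply: eq_bigr => j _; rewrite /read_le /= ltxx eqxx lerD2l lez_nat.
by move=> i j i0; rewrite read_le_lt_row //=; lia.
Qed.

Variable T : box -> nat.
Hypothesis ss : semistandard D T.
Hypothesis lat : lattice (reading_word D T).

Lemma Delta_entryE r c : (r < m)%N -> (c < n)%N -> (n - l r <= c)%N ->
  T (Posz r.+1, Posz c.+1) = col_height n l r.+1 c.
Proof.
have [tabD [rowD colD]] := ss.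
have inD := Delta_sub_direct_sum.
apply: (@filling_eq_col_height n m l (fun r c => T (Posz r.+1, Posz c.+1))).
- exact: Delta_rowlens_mono.
- by move=> r' c' r'm c'n h; apply/tabD/inD/mem_Delta; exists r', c'.
- move=> r' c' c'' r'm cc c''n h; apply: rowD => //=; try lia.
  + by apply/inD/mem_Delta; exists r', c'; split => //; lia.
  + by apply/inD/mem_Delta; exists r', c''; split => //; lia.
- move=> r' r'' c' rr r''m c'n h; apply: colD => //=; try lia.
  + by apply/inD/mem_Delta; exists r', c'; split => //; lia.
  + have := @Delta_rowlens_mono al r' r'' (ltnW rr) r''m.
    by move=> hl; apply/inD/mem_Delta; exists r'', c'; split => //; lia.
- move=> R C j Rm Cn hRC j0.
  have := @lattice_count_le _ _ (Posz R.+1, Posz C.+1) _ lat j0.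
  rewrite direct_sum_ferrersE !count_cat !count_lam_copy_before /= ?lez_nat //.
  by rewrite !count_Delta_prefix.
Qed.

Lemma count_Delta_value v : count (fun y => T y == v) (Delta al) =
  (\sum_(0 <= c < n) ((1 <= v) && (v <= col_height n l m c)))%N.
Proof.
rewrite count_Delta exchange_big /=; apply: eq_big_nat => c /andP[_ cn].
rewrite -(sum_col_height_eq n l m c v); apply: eq_big_nat => r /andP[_ rm].
by case: (n - l r <= c)%N /idP => //= h; rewrite Delta_entryE.
Qed.

Hypothesis ones : (count (fun b : box =>
  (b.1 == top_row (lam_copy lam al)) && (T b == 1%N)) (lam_copy lam al) <= k)%N.

(* Every box of [Delta al] precedes the first row of the copy of [lam] in reading order. *)
Lemma first_row_entry_gt c : (c < n)%N -> (c + k < L)%N ->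
  (col_height n l m c < T ((d.1 + 1)%R, (d.2 + Posz (c + k).+1)%R))%N.
Proof.
move=> cn ckL; have l0 : lam != [::] by case: (lam) ckL.
have [tabD [rowD _]] := ss.
have inRow0 j : (j < L)%N -> (d.1 + 1, d.2 + Posz j.+1) \in D.
  move=> jL; apply/lam_copy_sub_direct_sum/mem_place.
  by exists 0%N, j; rewrite nth0 lt0n size_eq0.
apply: (@height_lt_first_row n L k (col_height n l m)
  (fun j => T (d.1 + 1, d.2 + Posz j.+1))) => //.
- by move=> *; apply: leq_col_height.
- move=> j j' jj' j'L; case: (ltngtP j j') jj' => // [jj' _|-> //].
  by apply: rowD; rewrite ?inRow0 ?(ltn_trans jj') //= ltrD2l ltz_nat.
- by move=> j jL; apply/tabD/inRow0.
- move: ones; rewrite lam_copyE top_row_place // count_place sum_partition_row0 //.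
    by apply: leq_trans; apply: leq_sum_nat => j _; rewrite /= eqxx.
  by move=> i j i0 /=; rewrite (inj_eq (addrI _)) eqz_nat; case: i i0.
- move=> q w w0; have := @lattice_count_le _ _ (d.1 + 1, d.2 + Posz q.+1) _ lat w0.
  rewrite direct_sum_ferrersE !count_cat !count_lam_copy_row0 //.
  rewrite !count_Delta_before ?count_Delta_value ?dsum_shift_ferrers_fst ?ltrDl //.
  by rewrite addnC [X in (_ <= X)%N]addnC.
Qed.

(* The foundation box in column [c + 1] is in position [c + k] of its row of [lam]. *)
Lemma Delta_above_foundation_lt b b' : b \in Delta al -> b' \in F -> b.2 = b'.2 ->
  (T b < T (move_box b'))%N.
Proof.
move=> /mem_Delta[r [c [rm cn hrc ->]]] b'F.
have l0 : lam != [::] by case: (lam) b'F.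
rewrite (move_box_foundation _ b'F); move: b'F => /mem_place[i [j [il jl ->]]] e.
have ej : j = (c + k)%N by move: e => /=; lia.
subst j; have ckL : (c + k < L)%N := leq_trans jl (partition_nth_le_head _ i lp).
rewrite Delta_entryE //; apply: leq_ltn_trans (@leq_col_height_rows n l r.+1 m c rm) _.
apply: leq_trans (first_row_entry_gt _ cn ckL) _.
have -> : Posz m = d.1 by rewrite dsum_shift_ferrers_fst.
have -> : - Posz k + Posz (c + k).+1 + (Posz k + d.2) = d.2 + Posz (c + k).+1 by ring.
case: i il jl {e} => [|i] il jl; first by [].
have [_ [_ colD]] := ss; apply/ltnW/colD => //=; last by rewrite ltrD2l ltz_nat.
- apply/lam_copy_sub_direct_sum/mem_place.
  by exists 0%N, (c + k)%N; rewrite nth0 lt0n size_eq0.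
- by apply/lam_copy_sub_direct_sum/mem_place; exists i.+1, (c + k)%N.
Qed.

Lemma moved_semistandard : semistandard S (moved_tableau lam al k T).
Proof.
have [tabD [rowD colD]] := ss.
split; [|split].
- by move=> b bS; rewrite moved_tableauE; apply/tabD/move_box_in.
- move=> b b' bS b'S er lt; rewrite !moved_tableauE.
  have same : (b \in Delta al) = (b' \in Delta al).
    by apply/idP/idP; apply: S_shape_above_Delta; rewrite // er.
  by apply: rowD; rewrite ?move_box_in // !move_box_offset // same //= ltrD2r.
- move=> b b' bS b'S ec lt; rewrite !moved_tableauE.
  case: (boolP (b' \in Delta al)) => b'D.
    have bD := S_shape_above_Delta _ _ bS b'S (ltW lt) b'D.
    by rewrite /move_box bD b'D; apply: colD; rewrite ?Delta_sub_direct_sum.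
  case: (boolP (b \in Delta al)) => bD.
    rewrite /move_box bD; apply: Delta_above_foundation_lt => //.
    by move: b'S; rewrite mem_S_shape (negbTE b'D).
  apply: colD; rewrite ?move_box_in // !move_box_offset // (negbTE bD) (negbTE b'D) //=.
  by rewrite ec.
Qed.

End MovedTableau.

Theorem mainTheorem2 (al lam : seq nat) (k : nat) (T : box -> nat) :
  is_composition al ->
  is_partition lam ->
  (head 0%N lam <= size al + k)%N ->
  semistandard (direct_sum (ferrers lam) (Delta al)) T ->
  lattice (reading_word (direct_sum (ferrers lam) (Delta al)) T) ->
  (count (fun b : box =>
            (b.1 == top_row (lam_copy lam al)) && (T b == 1%N)) (lam_copy lam al)
     <= k)%N ->
  semistandard (S_shape lam al k) (moved_tableau lam al k T) /\
  lattice (reading_word (S_shape lam al k) (moved_tableau lam al k T)).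
Proof.
(* [is_composition al] and the bound on [head lam] only make the shapes those of the paper;
   the argument does not need them. *)
move=> _ lp _ ss lat ones; split; first exact: moved_semistandard.
by rewrite reading_word_moved.
Qed.
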